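(* Let $N$ be even and $M_N$ the set of perfect matchings of $\{1,\dots,N\}$, each identified with a fixed-point-free involution $\pi\in S_N$. For $\pi\in M_N$ and $i,j,k\in\{1,\dots,N\}$ define $T_{ijk}(\pi)\in M_N$ as follows: if $|\{i,j,k,\pi(i),\pi(j),\pi(k)\}|<6$ then $T_{ijk}(\pi)=\pi$; otherwise $T_{ijk}(\pi)$ is the perfect matching obtained from $\pi$ by removing the pairs $\{\pi(i),i\},\{j,\pi(j)\},\{k,\pi(k)\}$ and adding the pairs $\{i,j\},\{\pi(j),k\},\{\pi(k),\pi(i)\}$. Let $\pi$ be uniform over $M_N$, let $i\in\{1,\dots,N\}$ be fixed, and let $a,b$ be uniform over $\{1,\dots,N\}\setminus\{i\}$, with $\pi,a,b$ independent. Then $T_{iab}(\pi)$ is uniform over $M_N$, and $(T_{iab}(\pi))(i)=a$ provided that $|\{i,a,b,\pi(i),\pi(a),\pi(b)\}|=6$. *)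

From mathcomp Require Import all_boot all_order all_fingroup all_algebra.
Set Implicit Arguments. Unset Strict Implicit. Unset Printing Implicit Defensive.

Definition is_matching (N : nat) (p : {perm 'I_N}) : bool :=
  [forall x, (p (p x) == x) && (p x != x)].

Definition matchings (N : nat) : {set {perm 'I_N}} := [set p | is_matching p].

Definition Tfun (N : nat) (p : {perm 'I_N}) (i j k : 'I_N) (x : 'I_N) : 'I_N :=
  if #|[set i; j; k; p i; p j; p k]| < 6 then p x
  else if x == i then j
  else if x == j then i
  else if x == p j then k
  else if x == k then p j
  else if x == p k then p i
  else if x == p i then p k
  else p x.

(* T_{ijk}(p) as a permutation (the map is a bijection in all cases; the
   fallback p of insubd is never used). *)
Definition T (N : nat) (p : {perm 'I_N}) (i j k : 'I_N) : {perm 'I_N} :=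
  insubd p [ffun x => Tfun p i j k x].

(* Sample space of (pi, a, b): pi in M_N, a, b in {1..N} \ {i}, uniform. *)
Definition sample (N : nat) (i : 'I_N) : {set {perm 'I_N} * 'I_N * 'I_N} :=
  [set w | [&& w.1.1 \in matchings N, w.1.2 != i & w.2 != i]].

From mathcomp Require Import all_boot all_order all_fingroup all_algebra.
From mathcomp Require Import ring.
Set Implicit Arguments. Unset Strict Implicit. Unset Printing Implicit Defensive.

(* In the generic case put q := T p i a b.  Then q i = a, q b = p a and
   q (p i) = p b, and the rewiring is undone by p = T q i (p i) b.  Hence
   (p, a, b) |-> (q, b, p i), extended by the identity on degenerate triples,
   is injective on the sample space (the image of a generic triple is again
   generic), so it permutes the sample space and q is distributed exactly as
   p, i.e. uniformly. *)

Lemma card_setId_bij (T : finType) (S : {set T}) (f : T -> T) (P : pred T) :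
  {in S &, injective f} -> {in S, forall x, f x \in S} ->
  #|[set x in S | P (f x)]| = #|[set x in S | P x]|.
Proof.
move=> f_inj f_S.
have f_onto : f @: S = S.
  apply/eqP; rewrite eqEcard card_in_imset // leqnn andbT.
  by apply/subsetP => _ /imsetP [x xS ->]; exact: f_S.
rewrite -(card_in_imset (sub_in2 _ f_inj)); last by move=> x /setIdP [].
suff -> : f @: [set x in S | P (f x)] = [set x in S | P x] by [].
apply/setP => y; apply/imsetP/setIdP => [[x /setIdP [xS Pfx] ->]|].
  by split; [exact: f_S|].
move=> [yS Py]; move: yS; rewrite -{1}f_onto => /imsetP [x xS yfx].
by exists x; rewrite // inE xS -yfx.
Qed.

Definition six_distinct N (p : {perm 'I_N}) (i a b : 'I_N) : bool :=
  uniq [:: i; a; b; p i; p a; p b].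

Lemma card_six_lt6 N (p : {perm 'I_N}) (i a b : 'I_N) :
  (#|[set i; a; b; p i; p a; p b]| < 6) = ~~ six_distinct p i a b.
Proof.
have -> : [set i; a; b; p i; p a; p b] = [set x in [:: i; a; b; p i; p a; p b]].
  by apply/setP => x; rewrite !inE !orbA.
rewrite cardsE /six_distinct.
have := card_size [:: i; a; b; p i; p a; p b].
case: card_uniqP => [-> //|not_card]; rewrite /= ltnS leq_eqVlt.
by case/orP => [/eqP|].
Qed.

Lemma six_distinctC N (p : {perm 'I_N}) (i a b : 'I_N) :
  six_distinct p i a b = six_distinct p i b a.
Proof. by apply/perm_uniq/seq.permP => q; rewrite /=; ring. Qed.

Lemma insubd_ffun_perm (T : finType) (p : {perm T}) (f : T -> T) :
  injective f -> insubd p [ffun x => f x] =1 f.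
Proof.
move=> f_inj x; rewrite -pvalE insubdK ?ffunE // unfold_in.
by apply/injectiveP => y z; rewrite !ffunE; apply: f_inj.
Qed.

Section Matching.
Variables (N : nat) (p : {perm 'I_N}).
Hypothesis p_match : is_matching p.

Lemma matching_invol x : p (p x) = x.
Proof. by move/forallP: p_match => /(_ x) /andP [/eqP]. Qed.

Lemma matching_neq x : p x != x.
Proof. by move/forallP: p_match => /(_ x) /andP []. Qed.

Lemma matching_eq_sym x y : (p x == y) = (x == p y).
Proof. by rewrite -{1}(matching_invol y) (inj_eq perm_inj). Qed.

End Matching.

Ltac decide_eqs p_match := repeat (first [ progress rewrite eqxx /=
  | match goal with H : is_true (?u != ?v) |- context[?u == ?v] =>
      rewrite (negbTE H) /= end
  | match goal with H : is_true (?u != ?v) |- context[?v == ?u] =>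
      rewrite (eq_sym v u) (negbTE H) /= end
  | progress rewrite (matching_invol p_match)
  | rewrite (matching_eq_sym p_match) ?(matching_invol p_match) /= ]).

Ltac distinctness p_match p_gen :=
  match type of p_gen with is_true (six_distinct ?p ?i ?a ?b) =>
  move: (p_gen) (matching_neq p_match i) (matching_neq p_match a)
    (matching_neq p_match b);
  rewrite /six_distinct /= !inE !negb_or => ? ? ? ?;
  repeat match goal with H : is_true (_ && _) |- _ => case/andP: H => ? ? end
  end.

Section Rewiring.
Variables (N : nat) (p : {perm 'I_N}) (i a b : 'I_N).
Hypotheses (p_match : is_matching p) (p_gen : six_distinct p i a b).

Lemma TfunE x : Tfun p i a b x =
  if x == i then a else if x == a then i
  else if x == p a then b else if x == b then p a
  else if x == p b then p i else if x == p i then p b else p x.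
Proof. by rewrite /Tfun card_six_lt6 p_gen. Qed.

Lemma Tfun_invol_neq x : Tfun p i a b (Tfun p i a b x) = x /\ Tfun p i a b x != x.
Proof.
distinctness p_match p_gen; rewrite !TfunE.
have [->|?] := eqVneq x i; first by split; decide_eqs p_match.
have [->|?] := eqVneq x a; first by split; decide_eqs p_match.
have [->|?] := eqVneq x (p a); first by split; decide_eqs p_match.
have [->|?] := eqVneq x b; first by split; decide_eqs p_match.
have [->|?] := eqVneq x (p b); first by split; decide_eqs p_match.
have [->|?] := eqVneq x (p i); first by split; decide_eqs p_match.
split; decide_eqs p_match; first done.
by rewrite eq_sym matching_neq.
Qed.

Lemma TE : T p i a b =1 Tfun p i a b.
Proof.
apply: insubd_ffun_perm; apply: (can_inj (g := Tfun p i a b)) => x.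
by case: (Tfun_invol_neq x).
Qed.

Lemma T_is_matching_gen : is_matching (T p i a b).
Proof.
apply/forallP => x; rewrite !TE.
by case: (Tfun_invol_neq x) => -> ->; rewrite eqxx.
Qed.

Lemma T_i : T p i a b i = a.
Proof. by rewrite TE TfunE eqxx. Qed.

Lemma T_b : T p i a b b = p a.
Proof. by distinctness p_match p_gen; rewrite TE TfunE; decide_eqs p_match. Qed.

Lemma T_pi : T p i a b (p i) = p b.
Proof. by distinctness p_match p_gen; rewrite TE TfunE; decide_eqs p_match. Qed.

Lemma six_distinct_T : six_distinct (T p i a b) i b (p i).
Proof.
rewrite /six_distinct T_i T_b T_pi.
rewrite -(perm_uniq (s1 := [:: i; a; b; p i; p a; p b])) //.
by apply/seq.permP => q; rewrite /=; ring.
Qed.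

End Rewiring.

Lemma T_cancel N (p : {perm 'I_N}) (i a b : 'I_N) :
  is_matching p -> six_distinct p i a b -> T (T p i a b) i (p i) b = p.
Proof.
move=> p_match p_gen; have q_match := T_is_matching_gen p_match p_gen.
have q_gen : six_distinct (T p i a b) i (p i) b.
  by rewrite six_distinctC six_distinct_T.
apply/permP => x.
rewrite (TE q_match q_gen) TfunE // (T_i p_match p_gen) (T_b p_match p_gen).
rewrite (T_pi p_match p_gen) (TE p_match p_gen) TfunE //.
distinctness p_match p_gen.
have [->|?] := eqVneq x i; first by decide_eqs p_match.
have [->|?] := eqVneq x a; first by decide_eqs p_match.
have [->|?] := eqVneq x (p a); first by decide_eqs p_match.
have [->|?] := eqVneq x b; first by decide_eqs p_match.
have [->|?] := eqVneq x (p b); first by decide_eqs p_match.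
have [->|?] := eqVneq x (p i); first by decide_eqs p_match.
by decide_eqs p_match.
Qed.

Lemma T_degenerate N (p : {perm 'I_N}) (i a b : 'I_N) :
  ~~ six_distinct p i a b -> T p i a b = p.
Proof.
move=> p_deg.
have Tp : Tfun p i a b =1 p by move=> x; rewrite /Tfun card_six_lt6 p_deg.
apply/permP => x; rewrite insubd_ffun_perm ?Tp //.
exact: eq_inj perm_inj (fsym Tp).
Qed.

Lemma T_is_matching N (p : {perm 'I_N}) (i a b : 'I_N) :
  is_matching p -> is_matching (T p i a b).
Proof.
move=> p_match; have [p_gen|p_deg] := boolP (six_distinct p i a b).
  exact: T_is_matching_gen.
by rewrite T_degenerate.
Qed.



Definition resample N (i : 'I_N) (w : {perm 'I_N} * 'I_N * 'I_N) :=
  let: (p, a, b) := w in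
  if six_distinct p i a b then (T p i a b, b, p i) else w.

Lemma resample_perm N (i : 'I_N) w : (resample i w).1.1 = T w.1.1 i w.1.2 w.2.
Proof.
by case: w => [[p a] b] /=; case: ifP => // /negbT /T_degenerate ->.
Qed.

Lemma resample_sample N (i : 'I_N) w :
  w \in sample i -> resample i w \in sample i.
Proof.
case: w => [[p a] b]; rewrite !inE /= => /and3P [p_match a_i b_i].
case: ifP => _ /=; last by rewrite p_match a_i b_i.
by rewrite T_is_matching // b_i matching_neq.
Qed.

Lemma resample_inj N (i : 'I_N) : {in sample i &, injective (resample i)}.
Proof.
move=> [[p1 a1] b1] [[p2 a2] b2].
rewrite !inE /= => /and3P [m1 _ _] /and3P [m2 _ _].
case: ifP => g1; case: ifP => g2.
- case=> eT eb ep; have ea : a1 = a2 by rewrite -(T_i m1 g1) -(T_i m2 g2) eT.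
  by rewrite -(T_cancel m1 g1) -(T_cancel m2 g2) eT ep eb ea.
- by move=> e; move: g2; case: e => <- <- <-; rewrite six_distinct_T.
- by move=> e; move: g1; case: e => -> -> ->; rewrite six_distinct_T.
- done.
Qed.

Lemma card_T_fiber N (i : 'I_N) (sigma : {perm 'I_N}) :
  #|[set w in sample i | T w.1.1 i w.1.2 w.2 == sigma]| =
  #|[set w in sample i | w.1.1 == sigma]|.
Proof.
have -> : [set w in sample i | T w.1.1 i w.1.2 w.2 == sigma] =
          [set w in sample i | (resample i w).1.1 == sigma].
  by apply/setP => w; rewrite !inE resample_perm.
apply: card_setId_bij; [exact: resample_inj | exact: resample_sample].
Qed.

Lemma sample_setX N (i : 'I_N) :
  sample i = setX (setX (matchings N) [set~ i]) [set~ i].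
Proof. by apply/setP => -[[p a] b]; rewrite !inE /= andbA. Qed.

Lemma card_sample N (i : 'I_N) : #|sample i| = (#|matchings N| * N.-1 ^ 2)%N.
Proof. by rewrite sample_setX !cardsX cardsC1 card_ord -mulnA mulnn. Qed.

Lemma card_sample_fiber N (i : 'I_N) (sigma : {perm 'I_N}) :
  sigma \in matchings N -> #|[set w in sample i | w.1.1 == sigma]| = (N.-1 ^ 2)%N.
Proof.
move=> sigma_match.
have -> : [set w in sample i | w.1.1 == sigma] =
          setX (setX [set sigma] [set~ i]) [set~ i].
  apply/setP => -[[p a] b]; rewrite sample_setX !inE /=.
  case: (eqVneq p sigma) => [->|_]; last by rewrite !andbF.
  by move: sigma_match; rewrite inE => ->; rewrite andbT.
by rewrite !cardsX cards1 mul1n cardsC1 card_ord mulnn.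
Qed.

Import GRing.Theory Num.Theory.
Local Open Scope ring_scope.

Theorem lemma3p4 (N : nat) (hN : ~~ odd N) (i : 'I_N) :
  (forall sigma : {perm 'I_N}, sigma \in matchings N ->
     (#|[set w in sample i | T w.1.1 i w.1.2 w.2 == sigma]|%:R
        / #|sample i|%:R : rat)
     = 1 / #|matchings N|%:R)
  /\
  (forall (p : {perm 'I_N}) (a b : 'I_N),
     p \in matchings N -> a != i -> b != i ->
     #|[set i; a; b; p i; p a; p b]| = 6%N ->
     T p i a b i = a).
Proof.
split=> [sigma sigma_match | p a b p_match _ _ card6]; last first.
  apply: T_i; first by rewrite inE in p_match.
  by rewrite -[six_distinct _ _ _ _]negbK -card_six_lt6 card6.
have N_pred_gt0 : (0 < N.-1)%N.
  have N_gt0 : (0 < N)%N := leq_ltn_trans (leq0n i) (ltn_ord i).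
  by move: hN N_gt0; case: (N) => [|[|n]].
rewrite card_T_fiber card_sample_fiber // card_sample natrM.
rewrite invfM mulrCA mulfV ?mulr1 ?div1r //.
by rewrite pnatr_eq0 -lt0n expn_gt0 N_pred_gt0.
Qed.
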